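(* Let $T$ be a necklace and $a\preccurlyeq b$ vertices of $T$. Then the object $\iota^T_{a,b}:T_{[a,b]}\hookrightarrow T_{a,b}$ is terminal in the category $\mathcal{N}ec/T_{a,b}$.
   Context: Cubical sets: presheaves on the category $\square$ with objects $[1]^n$ and morphisms generated by faces $\partial_{i,\epsilon}$ (insert $\epsilon$ at coordinate $i$), degeneracies (delete a coordinate) and negative connections ($\gamma_{i,0}$ replaces $(x_i,x_{i+1})$ by $\max(x_i,x_{i+1})$); $\square^n$ is representable, with vertices the subsets of $\{1,\dots,n\}$, $\alpha=\emptyset$, $\omega=\{1,\dots,n\}$. For $a\subseteq b$ in $\square^n$, $d(a,b)=|b\setminus a|$ and $\iota^n_{a,b}:\square^{d(a,b)}\hookrightarrow\square^n$ is the (composite of faces) map with $\iota^n_{a,b}(\alpha)=a$, $\iota^n_{a,b}(\omega)=b$, which inserts the coordinates of $a$ and $\{1,\dots,n\}\setminus b$ as constants and the free coordinates in the positions of $b\setminus a$ in increasing order. Necklaces: for double-pointed cubical sets $X_{a,b},Y_{u,v}$, $X\vee Y$ is the pushout identifying $b$ with $u$, pointed by $(a,v)$; for maps $f:S_{a,b}\to X_{u,v}$, $g:S'_{a',b'}\to X_{v,w}$, $f*g:S\vee S'\to X$ is the induced map. A necklace is $T=\square^{n_1}\vee\dots\vee\square^{n_k}$ ($n_i\ge1$) pointed by $\alpha$ of the first and $\omega$ of the last cube, with beads $B_i:\square^{n_i}\to T$. Its vertex set is ordered by $\preccurlyeq$: $x\preccurlyeq y$ iff they lie in a common bead with $x\subseteq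 y$ or $x$ lies in an earlier bead than $y$. $\mathcal{N}ec$ is the full subcategory of double-pointed cubical sets on necklaces. For a cubical set $S$ and vertices $a,b$, $\mathcal{N}ec/S_{a,b}$ has objects maps $f:U\to S$ with $U$ a necklace sending its endpoints to $a,b$, and morphisms the maps $g$ in $\mathcal{N}ec$ with $f'g=f$. Subnecklace: for vertices $a\preccurlyeq b$ of $T$: if $a,b$ lie in the bead $\square^{n_i}$, $T_{[a,b]}=\square^{d(a,b)}$ and $\iota^T_{a,b}=B_i\circ\iota^{n_i}_{a,b}$; if $a\in\square^{n_i}$, $b\in\square^{n_j}$ with $i<j$, $T_{[a,b]}=\square^{d(a,\omega)}\vee\square^{n_{i+1}}\vee\dots\vee\square^{n_{j-1}}\vee\square^{d(\alpha,b)}$ and $\iota^T_{a,b}=(B_i\circ\iota^{n_i}_{a,\omega})*B_{i+1}*\dots*B_{j-1}*(B_j\circ\iota^{n_j}_{\alpha,b})$. *)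

From HB Require Import structures.
From mathcomp Require Import all_boot.

Set Implicit Arguments.
Unset Strict Implicit.
Unset Printing Implicit Defensive.

(* The box category: objects [1]^n, vertices of [1]^n are elements of  *)
(* cube n = subsets of {0..n-1} (as boolean functions).                *)

Definition cube n := {ffun 'I_n -> bool}.
Definition cbot n : cube n := [ffun => false].
Definition ctop n : cube n := [ffun => true].
Definition cpt : cube 0 := cbot 0.

Definition face n (i : 'I_n.+1) (e : bool) (x : cube n) : cube n.+1 :=
  [ffun j => if unlift i j is Some k then x k else e].

Definition degen n (i : 'I_n.+1) (x : cube n.+1) : cube n :=
  [ffun k => x (lift i k)].

(* negative connection gamma_{i,0} : [1]^{n+2} -> [1]^{n+1},
   replaces (x_i, x_{i+1}) by max(x_i, x_{i+1}) *)
Definition conn n (i : 'I_n.+1) (x : cube n.+2) : cube n.+1 :=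
  [ffun k => if k == i then x (widen_ord (leqnSn _) i) || x (lift ord0 i)
             else x (lift (lift ord0 i) k)].

Inductive boxhom : forall m n : nat, (cube m -> cube n) -> Prop :=
| bh_id n : @boxhom n n id
| bh_face n (i : 'I_n.+1) (e : bool) : @boxhom n n.+1 (face i e)
| bh_degen n (i : 'I_n.+1) : @boxhom n.+1 n (degen i)
| bh_conn n (i : 'I_n.+1) : @boxhom n.+2 n.+1 (conn i)
| bh_comp l m n (f : cube m -> cube n) (g : cube l -> cube m) :
    @boxhom m n f -> @boxhom l m g -> @boxhom l n (f \o g)
| bh_ext m n (f g : cube m -> cube n) : @boxhom m n f -> f =1 g -> @boxhom m n g.

Record boxmap m n := BoxMap { bfun :> cube m -> cube n; bfunP : @boxhom m n bfun }.

Definition bcomp l m n (f : boxmap m n) (g : boxmap l m) : boxmap l n :=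
  BoxMap (bh_comp (bfunP f) (bfunP g)).

Lemma cube0_eq (x y : cube 0) : x = y.
Proof. by apply/ffunP => -[]. Qed.

Lemma boxhom_to0 m (v : cube 0) : @boxhom m 0 (fun _ => v).
Proof.
elim: m => [|m IH].
  by apply: (bh_ext (bh_id 0)) => x; apply: cube0_eq.
by apply: (bh_ext (bh_comp IH (bh_degen (@ord0 m)))).
Qed.

Lemma face_degen n (v : cube n.+1) : face ord0 (v ord0) (degen ord0 v) = v.
Proof.
apply/ffunP => j; rewrite !ffunE; case: unliftP => [k ->|->] //.
by rewrite ffunE.
Qed.

Lemma boxhom_const m n (v : cube n) : @boxhom m n (fun _ => v).
Proof.
elim: n v => [|n IH] v; first exact: boxhom_to0.
apply: (bh_ext (bh_comp (bh_face ord0 (v ord0)) (IH (degen ord0 v)))) => x /=.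
exact: face_degen.
Qed.

Definition bconst m n (v : cube n) : boxmap m n := BoxMap (boxhom_const m v).

(* Necklaces T = [1]^{n_1} v ... v [1]^{n_k}, n_i >= 1 (k = 0 gives    *)
(* the point [1]^0).  The m-cubes of T are pairs (i, f) with           *)
(* f : [1]^m -> [1]^{n_i} a box map, modulo the pushout identification *)
(* (i, const omega) ~ (i+1, const alpha); we use the representatives   *)
(* which are not of the form (i, const omega) with i not last.         *)

Record necklace := Necklace { beads : seq nat; beads_pos : all (leq 1) beads }.

Definition nlist (T : necklace) : seq nat :=
  if beads T is [::] then [:: 0] else beads T.
Definition nk (T : necklace) : nat := (size (nlist T)).-1.+1.
Definition ndimn (T : necklace) (t : nat) : nat := nth 0 (nlist T) t.
Definition ndim (T : necklace) (i : 'I_(nk T)) : nat := ndimn T i.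

Definition ncanon (T : necklace) m (i : 'I_(nk T)) (f : boxmap m (ndim i)) : bool :=
  ~~ ((i.+1 < nk T) && [forall x : cube m, f x == ctop _]).

Definition ncell (T : necklace) (m : nat) : Type :=
  {p : {i : 'I_(nk T) & boxmap m (ndim i)} | ncanon (projT2 p)}.

Lemma not_canon_lt T m (i : 'I_(nk T)) (h : boxmap m (ndim i)) :
  ~~ ncanon h -> i.+1 < nk T.
Proof. by rewrite negbK => /andP []. Qed.

Definition nsucc T m (i : 'I_(nk T)) (h : boxmap m (ndim i)) (H : ~~ ncanon h)
  : 'I_(nk T) := Ordinal (not_canon_lt H).

Lemma ndim_pos T (j : 'I_(nk T)) : 0 < j -> 0 < ndim j.
Proof.
case: T j => [[|b bs] hb] j /=.
  by case: j => -[].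
move=> _; rewrite /ndim /ndimn /=.
have hj : j < size (b :: bs) by exact: ltn_ord j.
have := allP hb _ (mem_nth 0 hj); by [].
Qed.

Lemma canon_succ T m (i : 'I_(nk T)) (h : boxmap m (ndim i)) (H : ~~ ncanon h) :
  ncanon (bconst m (cbot (ndim (nsucc H)))).
Proof.
apply/negP => /andP [_ /forallP /(_ (cbot m)) /eqP E].
have hp : 0 < ndim (nsucc H) by apply: ndim_pos.
have := congr1 (fun f : cube _ => f (Ordinal hp)) E.
by rewrite /= !ffunE.
Qed.

Definition nnorm T m (i : 'I_(nk T)) (h : boxmap m (ndim i)) : ncell T m :=
  match boolP (ncanon h) with
  | AltTrue H => exist _ (existT _ i h) H
  | AltFalse H => exist _ (existT _ (nsucc H) (bconst m (cbot _))) (canon_succ H)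
  end.

Definition nact T m n (g : boxmap m n) (c : ncell T n) : ncell T m :=
  nnorm (bcomp (projT2 (sval c)) g).

Definition nbead T (i : 'I_(nk T)) m (h : boxmap m (ndim i)) : ncell T m := nnorm h.

Definition nvert T (i : 'I_(nk T)) (v : cube (ndim i)) : ncell T 0 :=
  nbead (bconst 0 v).

Definition nalpha T : ncell T 0 := @nvert T (@ord0 (size (nlist T)).-1) (cbot _).
Definition nomega T : ncell T 0 := @nvert T (@ord_max (size (nlist T)).-1) (ctop _).

Definition nfun (U T : necklace) := forall m, ncell U m -> ncell T m.
Definition natural U T (F : nfun U T) : Prop :=
  forall m n (g : boxmap m n) (c : ncell U n), F m (nact g c) = nact g (F n c).
Definition nfun_eq U T (F G : nfun U T) : Prop := forall m c, F m c = G m c.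
Definition ncompose U S T (F : nfun S T) (G : nfun U S) : nfun U T :=
  fun m c => F m (G m c).

Definition subv n (v w : cube n) : bool := [forall p, v p ==> w p].

Definition nprec T (x y : ncell T 0) : Prop :=
  (exists (i : 'I_(nk T)) (v w : cube (ndim i)),
      x = @nvert T i v /\ y = @nvert T i w /\ subv v w)
  \/ (exists (i j : 'I_(nk T)) (v : cube (ndim i)) (w : cube (ndim j)),
      i < j /\ x = @nvert T i v /\ y = @nvert T j w).

Definition nec_over U T (x y : ncell T 0) (F : nfun U T) : Prop :=
  natural F /\ F 0 (nalpha U) = x /\ F 0 (nomega U) = y.

Definition nec_hom U S (G : nfun U S) : Prop :=
  natural G /\ G 0 (nalpha U) = nalpha S /\ G 0 (nomega U) = nomega S.

Definition terminal_in_Nec_over T (x y : ncell T 0) S (F : nfun S T) : Prop :=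
  nec_over x y F /\
  forall U (G : nfun U T), nec_over x y G ->
    exists H : nfun U S,
      [/\ nec_hom H, nfun_eq (ncompose F H) G &
          forall H' : nfun U S, nec_hom H' -> nfun_eq (ncompose F H') G ->
            nfun_eq H' H].

(* The maps iota^n_{v,w} : [1]^{d(v,w)} -> [1]^n, v,w given as subsets *)
(* (boolean predicates on coordinate indices).                         *)
Definition vpred n (v : cube n) : nat -> bool :=
  fun p => if (insub p : option 'I_n) is Some q then v q else false.

Definition dvw n (v w : nat -> bool) : nat := count (fun p => w p && ~~ v p) (iota 0 n).

(* coordinates of v are constants 1, those outside w constants 0, the   *)
(* free coordinates (in w \ v) are filled by x in increasing order      *)
Definition ins n (v w : nat -> bool) e (x : cube e) : cube n :=
  [ffun p : 'I_n => if v p then true else if ~~ w p then false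
     else if (insub (count (fun q => w q && ~~ v q) (iota 0 p)) : option 'I_e)
          is Some q then x q else false].

(* Subnecklace T_{[a,b]}.  A bead of it is described by a triple       *)
(* (t, v, w): it is [1]^{d(v,w)} mapped into bead t of T by iota_{v,w}.*)
(* The vertex a (resp. b) is taken in its representative bead.         *)
(* Beads of dimension 0 are dropped ([1]^0 v X = X).                   *)
Definition trip := (nat * (nat -> bool) * (nat -> bool))%type.

Definition vbead T (x : ncell T 0) : nat := projT1 (sval x).
Definition vcoord T (x : ncell T 0) : nat -> bool := vpred (projT2 (sval x) cpt).

Definition sub_trips T (a b : ncell T 0) : seq trip :=
  let i := vbead a in let j := vbead b in
  if i == j then [:: (i, vcoord a, vcoord b)]
  else (i, vcoord a, fun _ => true)
         :: [seq (t, fun _ => false, fun _ => true) | t <- iota i.+1 (j - i.+1)]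
         ++ [:: (j, fun _ => false, vcoord b)].

Definition tdim T (tr : trip) : nat := dvw (ndimn T tr.1.1) tr.1.2 tr.2.

Definition subtr T (a b : ncell T 0) : seq trip :=
  [seq tr <- sub_trips a b | 0 < tdim T tr].

Lemma subnk_pos T (a b : ncell T 0) : all (leq 1) (map (tdim T) (subtr a b)).
Proof.
rewrite all_map; exact: filter_all.
Qed.

Definition subnk T (a b : ncell T 0) : necklace := Necklace (subnk_pos a b).

(* the triple describing bead k of T_{[a,b]} (default: the point a) *)
Definition ktrip T (a b : ncell T 0) (k : nat) : trip :=
  nth (vbead a : nat, vcoord a, vcoord a) (subtr a b) k.

Definition ktgt T (a b : ncell T 0) (k : 'I_(nk (subnk a b))) : 'I_(nk T) :=
  inord (ktrip a b k).1.1.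

Definition is_sub_iota T (a b : ncell T 0)
  (hs : forall k : 'I_(nk (subnk a b)), boxmap (ndim k) (ndim (ktgt k))) : Prop :=
  forall k x, hs k x = ins (ndim (ktgt k)) (ktrip a b k).1.2 (ktrip a b k).2 x.

Definition nstar S T (F : forall k : 'I_(nk S), forall m, boxmap m (ndim k) -> ncell T m)
  : nfun S T := fun m c => F (projT1 (sval c)) m (projT2 (sval c)).

(* iota^T_{a,b} = (B_i o iota_{a,omega}) * B_{i+1} * ... * (B_j o iota_{alpha,b}) *)
Definition sub_iota T (a b : ncell T 0)
  (hs : forall k : 'I_(nk (subnk a b)), boxmap (ndim k) (ndim (ktgt k)))
  : nfun (subnk a b) T :=
  nstar (fun k m g => nbead (bcomp (hs k) g)).

(** A map of necklaces G : U -> T with endpoints a and b is monotone for the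
    order on vertices, because box maps preserve inclusion of vertices and
    consecutive beads are glued omega to alpha; hence every vertex of G lies
    between a and b.  So a cube of G lies in a single bead t of T, above the
    coordinates of a when t is the bead of a and below those of b when t is
    the bead of b, i.e. it lands in the interval [v, w] of the corresponding
    bead iota_{v,w} of T_[a,b].  The face map iota_{v,w} has a retraction
    made of degeneracies that fixes this interval, so the cube lifts to
    T_[a,b].  Since iota^T_{a,b} is injective on cubes, the lift is unique,
    and uniqueness makes it natural and pointed. *)

From mathcomp Require Import all_boot zify.
From Stdlib Require Import FunctionalExtensionality ProofIrrelevance IndefiniteDescription.

Set Implicit Arguments.
Unset Strict Implicit.
Unset Printing Implicit Defensive.

Lemma boxmap_ext m n (f g : boxmap m n) : f =1 g -> f = g.
Proof.
case: f g => f Hf [g Hg] /= /functional_extensionality E; subst g.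
by rewrite (proof_irrelevance _ Hf Hg).
Qed.

Lemma vpredE n (u : cube n) (q : 'I_n) : vpred u q = u q.
Proof. by rewrite /vpred valK. Qed.

Lemma vpred_out n (u : cube n) p : n <= p -> vpred u p = false.
Proof. by move=> h; rewrite /vpred insubN // -leqNgt. Qed.

Lemma vpred_inj n (u u' : cube n) : vpred u =1 vpred u' -> u = u'.
Proof. by move=> E; apply/ffunP => q; rewrite -!vpredE E. Qed.

Lemma vpred_ctop n p : vpred (ctop n) p = (p < n).
Proof. by rewrite /vpred; case: insubP => [q -> _|/negbTE -> //]; rewrite ffunE. Qed.

Lemma vpred_cbot n p : vpred (cbot n) p = false.
Proof. by rewrite /vpred; case: insubP => [q _ _|//]; rewrite ffunE. Qed.

Lemma vpred_ctopP n (u : cube n) : (forall p, p < n -> vpred u p) -> u = ctop n.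
Proof.
move=> H; apply: vpred_inj => p; rewrite vpred_ctop.
by case: ltnP => hp; [exact: H | exact: vpred_out].
Qed.

Lemma vpred_neq_ctop n (u : cube n) p : p < n -> vpred u p = false -> u != ctop n.
Proof. by move=> hp hu; apply/eqP => E; rewrite E vpred_ctop hp in hu. Qed.

Lemma cbot_neq_ctop n : 0 < n -> cbot n != ctop n.
Proof. by move=> hn; apply: (@vpred_neq_ctop _ _ 0); rewrite ?vpred_cbot. Qed.

Lemma subv_vpred n (u u' : cube n) p : subv u u' -> vpred u p -> vpred u' p.
Proof.
by move=> /forallP H; rewrite /vpred; case: insubP => // q _ _; apply/implyP.
Qed.

Lemma subv_cbot n (u : cube n) : subv (cbot n) u.
Proof. by apply/forallP => q; rewrite ffunE. Qed.

Lemma subv_ctop n (u : cube n) : subv u (ctop n).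
Proof. by apply/forallP => q; rewrite ffunE implybT. Qed.

Lemma boxhom_subv m n (f : cube m -> cube n) :
  boxhom f -> {homo f : u u' / subv u u'}.
Proof.
elim=> {m n f} [n|n i e|n i|n i|l m n f g _ Hf _ Hg|m n f g _ Hf E] u u' //.
- move=> /forallP H; apply/forallP => j; rewrite !ffunE.
  by case: unlift => [k|]; rewrite ?implybb ?H.
- by move=> /forallP H; apply/forallP => j; rewrite !ffunE H.
- move=> /forallP H; apply/forallP => j; rewrite !ffunE; case: ifP => _; last exact: H.
  by apply/implyP => /orP [] /(implyP (H _)) ->; rewrite ?orbT.
- by move=> /Hg /Hf.
- by rewrite -!E; apply: Hf.
Qed.

(** * Cells of a necklace *)

Definition cell_bead T m (c : ncell T m) : nat := projT1 (sval c).
Definition cell_coord T m (c : ncell T m) (x : cube m) : nat -> bool :=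
  vpred (projT2 (sval c) x).

Lemma cell_ext T m (c c' : ncell T m) :
  cell_bead c = cell_bead c' -> (forall x p, cell_coord c x p = cell_coord c' x p) ->
  c = c'.
Proof.
case: c c' => [[i h] H] [[i' h'] H']; rewrite /cell_bead /cell_coord /=.
move=> /val_inj Ei; subst i' => E.
have Eh : h = h' by apply: boxmap_ext => x; apply: vpred_inj => p; apply: E.
by subst h'; rewrite (bool_irrelevance H H').
Qed.

Lemma nnorm_canon T m (i : 'I_(nk T)) (h : boxmap m (ndim i)) (H : ncanon h) :
  nnorm h = exist _ (existT _ i h) H.
Proof.
rewrite /nnorm; destruct (boolP (ncanon h)) as [H'|H']; last by exfalso; move/negP: H'.
by rewrite (bool_irrelevance H' H).
Qed.

Lemma nnorm_succ T m (i : 'I_(nk T)) (h : boxmap m (ndim i)) (H : ~~ ncanon h) :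
  nnorm h = exist _ (existT _ (nsucc H) (bconst m (cbot _))) (canon_succ H).
Proof.
rewrite /nnorm; destruct (boolP (ncanon h)) as [H'|H']; first by exfalso; move/negP: H.
by rewrite (bool_irrelevance H' H).
Qed.

Lemma cell_bead_nnorm T m (i : 'I_(nk T)) (h : boxmap m (ndim i)) :
  cell_bead (nnorm h) = if ncanon h then i : nat else i.+1.
Proof. by case: (boolP (ncanon h)) => H; rewrite ?(nnorm_canon H) ?(nnorm_succ H). Qed.

Lemma cell_coord_nnorm T m (i : 'I_(nk T)) (h : boxmap m (ndim i)) x p :
  cell_coord (nnorm h) x p = ncanon h && vpred (h x) p.
Proof.
case: (boolP (ncanon h)) => H; first by rewrite (nnorm_canon H).
by rewrite (nnorm_succ H) /cell_coord /= vpred_cbot.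
Qed.

Lemma nnorm_ext T m (i i' : 'I_(nk T)) (h : boxmap m (ndim i)) (h' : boxmap m (ndim i')) :
  i = i' :> nat -> (forall x p, vpred (h x) p = vpred (h' x) p) -> nnorm h = nnorm h'.
Proof.
move=> /val_inj Ei E; subst i'.
by have -> : h = h' by apply: boxmap_ext => x; apply: vpred_inj => p; apply: E.
Qed.

Lemma noncanonE T m (i : 'I_(nk T)) (h : boxmap m (ndim i)) :
  ~~ ncanon h = (i.+1 < nk T) && [forall x, h x == ctop _].
Proof. by rewrite /ncanon negbK. Qed.

Lemma ncanon_neq_ctop T m (i : 'I_(nk T)) (h : boxmap m (ndim i)) x :
  h x != ctop _ -> ncanon h.
Proof.
move=> hx; rewrite /ncanon negb_and; apply/orP; right.
by apply: contra hx => /forallP /(_ x).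
Qed.

Lemma ncanon_const T m (i : 'I_(nk T)) (h : boxmap m (ndim i)) c :
  (forall x, h x = c) -> ncanon h = ~~ ((i.+1 < nk T) && (c == ctop _)).
Proof.
move=> E; rewrite /ncanon; congr (~~ (_ && _)).
by apply/forallP/idP => [/(_ (cbot m))|H x]; rewrite E.
Qed.

Lemma nact_nnorm T l m (i : 'I_(nk T)) (h : boxmap m (ndim i)) (g : boxmap l m) :
  nact g (nnorm h) = nnorm (bcomp h g).
Proof.
case: (boolP (ncanon h)) => H; first by rewrite (nnorm_canon H).
rewrite (nnorm_succ H) /nact /=.
have canon_bot : ncanon (bcomp (bconst m (cbot (ndim (nsucc H)))) g).
  apply: (@ncanon_neq_ctop _ _ _ _ (cbot l)) => /=.
  by apply: cbot_neq_ctop; apply: ndim_pos.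
have noncanon_hg : ~~ ncanon (bcomp h g).
  move: (H); rewrite !noncanonE => /andP [-> /forallP Hx] /=.
  by apply/forallP => x; apply: Hx.
apply: cell_ext => [|x p];
  by rewrite ?cell_bead_nnorm ?cell_coord_nnorm canon_bot (negbTE noncanon_hg) //= vpred_cbot.
Qed.

Lemma nact_comp T l m n (g : boxmap l m) (g' : boxmap m n) (c : ncell T n) :
  nact g (nact g' c) = nact (bcomp g' g) c.
Proof. by rewrite [nact g' c]/nact nact_nnorm /nact; congr nnorm; apply: boxmap_ext. Qed.

(** * Vertices and their order *)

Lemma bconst0_pt n (h : boxmap 0 n) : bconst 0 (h cpt) = h.
Proof. by apply: boxmap_ext => x /=; rewrite (cube0_eq x cpt). Qed.

Lemma nvert_cell0 T (y : ncell T 0) : y = nvert (projT2 (sval y) cpt).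
Proof. by case: y => [[i h] H]; rewrite /nvert /nbead /= bconst0_pt (nnorm_canon H). Qed.

Lemma vbead_nvert T (i : 'I_(nk T)) (u : cube (ndim i)) :
  vbead (nvert u) = if (i.+1 < nk T) && (u == ctop _) then i.+1 else i.
Proof.
rewrite -[vbead _]/(cell_bead (nnorm (bconst 0 u))).
by rewrite cell_bead_nnorm (@ncanon_const T 0 i (bconst 0 u) u) // if_neg.
Qed.

Lemma vcoord_nvert T (i : 'I_(nk T)) (u : cube (ndim i)) p :
  vcoord (nvert u) p = ~~ ((i.+1 < nk T) && (u == ctop _)) && vpred u p.
Proof.
rewrite -[vcoord _ p]/(cell_coord (nnorm (bconst 0 u)) cpt p).
by rewrite cell_coord_nnorm (@ncanon_const T 0 i (bconst 0 u) u).
Qed.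

Lemma vbead_nvert_ge T (i : 'I_(nk T)) (u : cube (ndim i)) : i <= vbead (nvert u).
Proof. by rewrite vbead_nvert; case: ifP. Qed.

Lemma vertex_ext T (y z : ncell T 0) :
  vbead y = vbead z -> vcoord y =1 vcoord z -> y = z.
Proof. by move=> Eb Ec; apply: cell_ext => // x p; rewrite (cube0_eq x cpt); apply: Ec. Qed.

Lemma nvert_eq T (i : 'I_(nk T)) (u : cube (ndim i)) (y : ncell T 0) :
  i = vbead y :> nat -> vpred u =1 vcoord y -> nvert u = y.
Proof.
move=> Ei Eu; rewrite [RHS]nvert_cell0 /nvert /nbead.
by apply: nnorm_ext => // x p /=; apply: Eu.
Qed.

Lemma nvert_inj T (i : 'I_(nk T)) : injective (@nvert T i).
Proof.
move=> u u' E; have /eqP := congr1 (@vbead T) E; rewrite !vbead_nvert.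
case Ht: ((i.+1 < nk T) && (u == ctop _)); case Ht': ((i.+1 < nk T) && (u' == ctop _)).
- by case/andP: Ht => _ /eqP ->; case/andP: Ht' => _ /eqP ->.
- by rewrite eqn_leq ltnn.
- by rewrite eqn_leq ltnn andbF.
move=> _; apply: vpred_inj => p.
by have := congr1 (fun y => vcoord y p) E; rewrite !vcoord_nvert Ht Ht'.
Qed.

Lemma nvert_ctop_succ T (i j : 'I_(nk T)) : j = i.+1 :> nat ->
  nvert (ctop (ndim i)) = nvert (cbot (ndim j)).
Proof.
move=> Ej; have hi : i.+1 < nk T by rewrite -Ej ltn_ord.
have hj : 0 < ndim j by apply: ndim_pos; rewrite Ej.
apply: vertex_ext => [|p].
  by rewrite !vbead_nvert hi eqxx Ej (negbTE (cbot_neq_ctop hj)) andbF.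
by rewrite !vcoord_nvert hi eqxx vpred_cbot andbF.
Qed.

Lemma nact_bconst0 T m (c : ncell T m) (x : cube m) :
  nact (bconst 0 x) c = nvert (projT2 (sval c) x).
Proof.
case: c => [[t f] H] /=; rewrite /nact /nvert /nbead /=.
by congr nnorm; apply: boxmap_ext.
Qed.

Lemma nact_pt T (y : ncell T 0) : nact (bconst 0 cpt) y = y.
Proof. by rewrite nact_bconst0 -nvert_cell0. Qed.

Lemma ncanon_vertex_in_bead T m (t : 'I_(nk T)) (f : boxmap m (ndim t)) :
  ncanon f -> exists x, vbead (nvert (f x)) = t.
Proof.
rewrite /ncanon negb_and => /orP [H|/forallPn [x Hx]].
  by exists (cbot m); rewrite vbead_nvert (negbTE H).
by exists x; rewrite vbead_nvert (negbTE Hx) andbF.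
Qed.

Lemma cell_vertex_ext T m (c c' : ncell T m) :
  (forall x : cube m, nact (bconst 0 x) c = nact (bconst 0 x) c') -> c = c'.
Proof.
move=> E; have {}E x : nvert (projT2 (sval c) x) = nvert (projT2 (sval c') x).
  by rewrite -!nact_bconst0.
case: c c' E => [[t f] H] [[t' f'] H'] /= E.
have Ett : t = t' :> nat.
  have [x0 h0] := ncanon_vertex_in_bead H; have [x1 h1] := ncanon_vertex_in_bead H'.
  apply/eqP; rewrite eqn_leq; apply/andP; split.
    by rewrite -h1 -(E x1) vbead_nvert_ge.
  by rewrite -h0 (E x0) vbead_nvert_ge.
have /val_inj Et := Ett; subst t'.
by apply: cell_ext => // x p; rewrite /cell_coord /= (nvert_inj (E x)).
Qed.

(* The order [nprec] read off normal forms: lexicographic in (bead, coordinates). *)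
Definition vle T (y z : ncell T 0) : Prop :=
  vbead y < vbead z \/ (vbead y = vbead z /\ forall p, vcoord y p -> vcoord z p).

Lemma vle_refl T (y : ncell T 0) : vle y y.
Proof. by right. Qed.

Lemma vle_trans T (x y z : ncell T 0) : vle x y -> vle y z -> vle x z.
Proof.
move=> [h1|[e1 h1]] [h2|[e2 h2]].
- by left; apply: ltn_trans h2.
- by left; rewrite -e2.
- by left; rewrite e1.
- by right; split; [rewrite e1 | move=> p /h1 /h2].
Qed.

Lemma vle_nvert T (i : 'I_(nk T)) (u u' : cube (ndim i)) :
  subv u u' -> vle (nvert u) (nvert u').
Proof.
move=> H; rewrite /vle !vbead_nvert.
case Ht': ((i.+1 < nk T) && (u' == ctop _)); case Ht: ((i.+1 < nk T) && (u == ctop _)).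
- by right; split => // p; rewrite !vcoord_nvert Ht.
- by left.
- case/andP: Ht => hi /eqP Eu; suff Eu' : u' = ctop _ by rewrite hi Eu' eqxx in Ht'.
  by apply/ffunP => q; move/forallP: H => /(_ q); rewrite Eu !ffunE.
- by right; split => // p; rewrite !vcoord_nvert Ht Ht' /=; apply: subv_vpred.
Qed.

Lemma nprec_vle T (x y : ncell T 0) : nprec x y -> vle x y.
Proof.
case=> [[i [v [w [-> [-> H]]]]]|[i [j [v [w [hij [-> ->]]]]]]]; first exact: vle_nvert.
rewrite /vle !vbead_nvert.
case Hv: ((i.+1 < nk T) && (v == ctop _)); case: ((j.+1 < nk T) && (w == ctop _)).
- by left; rewrite ltnS.
- move: hij; rewrite leq_eqVlt => /orP [/eqP hij|hij]; last by left.
  by right; split => // p; rewrite vcoord_nvert Hv.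
- by left; apply: ltn_trans hij _.
- by left.
Qed.

Lemma natural_vle_nvert U T (G : nfun U T) (s : 'I_(nk U)) (u u' : cube (ndim s)) :
  natural G -> subv u u' -> vle (G 0 (nvert u)) (G 0 (nvert u')).
Proof.
move=> HG Hu; pose c := @nbead U s _ (BoxMap (bh_id (ndim s))).
have Ev z : nvert z = nact (bconst 0 z) c.
  by rewrite nact_nnorm /nvert /nbead; congr nnorm; apply: boxmap_ext.
rewrite !Ev !HG !nact_bconst0; apply: vle_nvert.
exact: boxhom_subv (bfunP _) _ _ Hu.
Qed.

Lemma natural_alpha_vle U T (G : nfun U T) (y : ncell U 0) :
  natural G -> vle (G 0 (nalpha U)) (G 0 y).
Proof.
move=> HG; rewrite [y]nvert_cell0; case: y => [[s h] _] /=.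
have Hbot n (t : 'I_(nk U)) : t = n :> nat ->
    vle (G 0 (nalpha U)) (G 0 (nvert (cbot (ndim t)))).
  elim: n t => [|n IH] t Et.
    have -> : t = ord0 by apply: val_inj.
    exact: vle_refl.
  have hn : n < nk U by apply: ltnW; rewrite -Et.
  rewrite -(@nvert_ctop_succ _ (Ordinal hn) t) //.
  apply: vle_trans (IH (Ordinal hn) erefl) _.
  exact: natural_vle_nvert (subv_ctop _).
apply: vle_trans (Hbot _ s erefl) _.
exact: natural_vle_nvert (subv_cbot _).
Qed.

Lemma natural_vle_omega U T (G : nfun U T) (y : ncell U 0) :
  natural G -> vle (G 0 y) (G 0 (nomega U)).
Proof.
move=> HG; rewrite [y]nvert_cell0; case: y => [[s h] _] /=.
have Htop d (t : 'I_(nk U)) : t + d = (nk U).-1 ->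
    vle (G 0 (nvert (ctop (ndim t)))) (G 0 (nomega U)).
  elim: d t => [|d IH] t Et.
    have -> : t = ord_max by apply: val_inj; move: Et; rewrite addn0.
    exact: vle_refl.
  have ht : t.+1 < nk U by move: (ltn_ord t) Et; rewrite /nk; lia.
  rewrite (@nvert_ctop_succ _ t (Ordinal ht)) //.
  apply: vle_trans (IH (Ordinal ht) _); last by rewrite /= addSnnS.
  exact: natural_vle_nvert (subv_ctop _).
apply: vle_trans (Htop ((nk U).-1 - s) s _); last by move: (ltn_ord s); rewrite /nk; lia.
exact: natural_vle_nvert (subv_ctop _).
Qed.

Lemma ncanon_vbead_cbot T m (t : 'I_(nk T)) (f : boxmap m (ndim t)) :
  ncanon f -> vbead (nvert (f (cbot m))) = t.
Proof.
move=> H; rewrite vbead_nvert; case: ifP => // /andP [ht /eqP Ef].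
suff : ~~ ncanon f by rewrite H.
rewrite noncanonE ht; apply/forallP => x; apply/eqP/ffunP => q.
have /forallP /(_ q) := boxhom_subv (bfunP f) (subv_cbot x).
by rewrite Ef !ffunE implyTb => ->.
Qed.

Lemma ncanon_vle_lower T m (t : 'I_(nk T)) (f : boxmap m (ndim t)) (a : ncell T 0) :
  ncanon f -> vle a (nvert (f (cbot m))) ->
  vbead a <= t /\ (vbead a = t -> forall x p, vcoord a p -> vpred (f x) p).
Proof.
move=> H; rewrite /vle ncanon_vbead_cbot // => lo.
split; first by case: lo => [/ltnW|[-> _]].
move=> Eat x p; case: lo => [|[_ hsub]]; first by rewrite Eat ltnn.
move=> /hsub; rewrite vcoord_nvert => /andP [_].
exact: subv_vpred (boxhom_subv (bfunP f) (subv_cbot x)).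
Qed.

Lemma vle_upper T m (t : 'I_(nk T)) (f : boxmap m (ndim t)) (b : ncell T 0) :
  vle (nvert (f (ctop m))) b ->
  t <= vbead b /\ (t = vbead b :> nat -> forall x p, vpred (f x) p -> vcoord b p).
Proof.
have ge := vbead_nvert_ge (f (ctop m)).
move=> up; split; first by case: up => [/ltnW /(leq_trans ge)|[<- _]].
move=> Etb x p hp; case: up => [hlt|[]]; first by move: ge; rewrite Etb leqNgt hlt.
rewrite vbead_nvert; case: ifP => [_|Hc _ hsub].
  by rewrite Etb => /eqP; rewrite eqn_leq ltnn.
apply: hsub; rewrite vcoord_nvert Hc /=.
exact: subv_vpred (boxhom_subv (bfunP f) (subv_ctop x)) hp.
Qed.

(** * The face maps iota_{v,w} *)

Lemma count_iotaS (P : pred nat) n : count P (iota 0 n.+1) = count P (iota 0 n) + P n.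
Proof. by rewrite -addn1 iotaD count_cat /= addn0. Qed.

Lemma count_iota_bump (P : pred nat) q k : ~~ P q ->
  count P (iota 0 (bump q k)) = count (fun r => P (bump q r)) (iota 0 k).
Proof.
move=> Pq; elim: k => [|k IH].
  by rewrite /bump; case: q Pq => [|q] Pq //=; rewrite (negbTE Pq).
rewrite count_iotaS -IH.
have [h|h] := leqP q k.
  have -> : bump q k.+1 = (bump q k).+1 by rewrite /bump h (leq_trans h (leqnSn k)).
  by rewrite count_iotaS.
rewrite /bump (leqNgt q k) h /=.
case: (ltngtP q k.+1) => h2.
- by lia.
- by rewrite /= !add0n -count_iotaS.
- have Pk : P k.+1 = false by rewrite -h2 (negbTE Pq).
  by rewrite [true + _]/= !count_iotaS Pk addn0 add0n.
Qed.

Lemma count_free_lt n (v w : nat -> bool) p : p < n -> w p && ~~ v p ->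
  count (fun q => w q && ~~ v q) (iota 0 p) < dvw n v w.
Proof.
move=> hp hf; rewrite /dvw -(subnKC (ltnW hp)) iotaD count_cat add0n.
rewrite -[X in X < _]addn0 ltn_add2l.
by case E: (n - p) => [|d]; [move: hp; rewrite -subn_gt0 E | rewrite /= hf].
Qed.

Lemma dvw_eq0 n (v w : nat -> bool) p : dvw n v w = 0 -> p < n -> w p -> v p.
Proof.
move=> /eqP; rewrite /dvw -leqn0 leqNgt -has_count => /hasPn H hp wp.
by have := H p; rewrite mem_iota /= hp wp => /(_ isT); rewrite negbK.
Qed.

Lemma vpred_ins n (v w : nat -> bool) e (x : cube e) p :
  vpred (ins n v w x) p =
  (p < n) && (v p || w p && vpred x (count (fun q => w q && ~~ v q) (iota 0 p))).
Proof.
case: (ltnP p n) => hp; last by rewrite vpred_out.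
rewrite -[p]/(nat_of_ord (Ordinal hp)) vpredE ffunE /=.
by case: (v p) => //; case: (w p).
Qed.

Lemma vpred_ins_ctop n (v w : nat -> bool) e p : e = dvw n v w ->
  vpred (ins n v w (ctop e)) p = (p < n) && (v p || w p).
Proof.
move=> ->; rewrite vpred_ins vpred_ctop; case: (ltnP p n) => //= hp.
by case Ev: (v p) => //=; case Ew: (w p) => //=; rewrite count_free_lt // Ew Ev.
Qed.

Lemma vpred_ins_cbot n (v w : nat -> bool) e p :
  vpred (ins n v w (cbot e)) p = (p < n) && v p.
Proof. by rewrite vpred_ins vpred_cbot andbF orbF. Qed.

Lemma degen_faceK n (q : 'I_n.+1) c : cancel (face q c) (degen q).
Proof. by move=> y; apply/ffunP => k; rewrite !ffunE liftK. Qed.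

Lemma face_degen_at n (q : 'I_n.+1) (y : cube n.+1) : face q (y q) (degen q y) = y.
Proof.
by apply/ffunP => j; rewrite !ffunE; case: unliftP => [k ->|->] //; rewrite ffunE.
Qed.

Lemma ins_face n (q : 'I_n.+1) (v w : nat -> bool) e (x : cube e) :
  v q || ~~ w q ->
  ins n.+1 v w x = face q (v q) (ins n (v \o bump q) (w \o bump q) x).
Proof.
move=> Hq; apply/ffunP => j; rewrite !ffunE.
case: unliftP => [k ->|->].
  by rewrite ffunE /= count_iota_bump // negb_and negbK orbC.
by case: (v q) Hq => //= /negbTE ->.
Qed.

Definition in_interval n (v w : nat -> bool) (y : cube n) : Prop :=
  forall q : 'I_n, (v q -> y q) /\ (y q -> w q).

Definition ins_retraction n (v w : nat -> bool) e (r : cube n -> cube e) : Prop :=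
  [/\ boxhom r, cancel (@ins n v w e) r &
      forall y, in_interval v w y -> ins n v w (r y) = y].

Lemma ins_all_free n (v w : nat -> bool) e :
  e = dvw n v w -> (forall q : 'I_n, ~~ v q && w q) ->
  boxhom (@ins n v w e) /\ exists r : cube n -> cube e, ins_retraction v w r.
Proof.
move=> He Hf.
have Hc p : p <= n -> count (fun q => w q && ~~ v q) (iota 0 p) = p.
  elim: p => [//|p IH] hp; rewrite count_iotaS IH ?(ltnW hp) //.
  by have /= := Hf (Ordinal hp); rewrite andbC => ->; rewrite addn1.
have En : e = n by rewrite He /dvw Hc.
clear He; subst e.
have Hid (x : cube n) : ins n v w x = x.
  apply/ffunP => q; rewrite ffunE.
  have /andP [/negbTE -> ->] /= := Hf q.
  by rewrite Hc ?(ltnW (ltn_ord q)) // valK.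
split; first exact: bh_ext (bh_id n) (fun x => esym (Hid x)).
by exists id; split=> [|x|y _]; rewrite ?Hid //; exact: bh_id.
Qed.

(* Each fixed coordinate of [ins] is a face, and the matching degeneracy undoes it. *)
Lemma boxhom_ins_retraction n (v w : nat -> bool) e :
  e = dvw n v w ->
  boxhom (@ins n v w e) /\ exists r : cube n -> cube e, ins_retraction v w r.
Proof.
elim: n v w => [|n IH] v w He; first by apply: ins_all_free => // -[].
have [/existsP [q Hq]|/existsPn Hn] := boolP [exists q : 'I_n.+1, v q || ~~ w q];
  last by apply: ins_all_free => // q; move: (Hn q); rewrite negb_or negbK.
have He' : e = dvw n (v \o bump q) (w \o bump q).
  have Hq' : ~~ (w q && ~~ v q) by rewrite negb_and negbK orbC.
  have := @count_iota_bump (fun r => w r && ~~ v r) q n Hq'.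
  by rewrite /bump -ltnS ltn_ord He /dvw => ->.
have [Hb [r [Hr Hri Hir]]] := IH _ _ He'.
split.
  by apply: bh_ext (bh_comp (bh_face q (v q)) Hb) _ => x /=; rewrite (ins_face _ Hq).
exists (r \o degen q); split=> [|x|y Hy] /=; first exact: bh_comp Hr (bh_degen q).
  by rewrite (ins_face _ Hq) degen_faceK Hri.
rewrite (ins_face _ Hq) Hir; last by move=> k; rewrite ffunE; exact: Hy (lift q k).
suff -> : v q = y q by exact: face_degen_at.
case: (Hy q); case: (v q) Hq => /= [_ -> //|/negbTE Hw _ Hyw].
by case: (y q) Hyw => // /(_ isT); rewrite Hw.
Qed.

(** * The subnecklace T_[a,b] *)

Lemma vbead_lt T (y : ncell T 0) : vbead y < nk T.
Proof. exact: ltn_ord. Qed.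

Lemma vcoord_lt T (y : ncell T 0) p : vcoord y p -> p < ndimn T (vbead y).
Proof. by case: ltnP => // h; rewrite /vcoord vpred_out. Qed.

Lemma dvw_bead_pos T t : 0 < t -> t < nk T ->
  0 < dvw (ndimn T t) (fun _ => false) (fun _ => true).
Proof.
move=> t_gt0 t_lt; rewrite /dvw count_predT size_iota.
exact: (@ndim_pos T (Ordinal t_lt)).
Qed.

(* Positive because a vertex is never represented by the omega of a non-final bead. *)
Lemma dvw_vcoord_top_pos T (y : ncell T 0) : (vbead y).+1 < nk T ->
  0 < dvw (ndimn T (vbead y)) (vcoord y) (fun _ => true).
Proof.
case: y => [[i f] H]; rewrite /vbead /vcoord /= => hl.
move: (H); rewrite /ncanon /= hl /= => /forallPn [x].
rewrite (cube0_eq x cpt) => /eqP Hx.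
have [q Hq] : exists q, ~~ f cpt q.
  apply/existsP; apply: contra_notT Hx => /existsPn H0.
  by apply/ffunP => q; rewrite ffunE; apply/negPn.
rewrite /dvw -has_count; apply/hasP; exists (val q); first by rewrite mem_iota /=.
by rewrite vpredE.
Qed.

Section SubnecklaceBeads.
Variables (T : necklace) (a b : ncell T 0).

Definition sub_trip k : trip :=
  (vbead a + k, if k == 0 then vcoord a else (fun _ => false),
   if vbead a + k == vbead b then vcoord b else (fun _ => true)).

(* Only the bead of [b] can be 0-dimensional, and it is then dropped. *)
Definition sub_len : nat :=
  vbead b - vbead a + (0 < tdim T (sub_trip (vbead b - vbead a))).

Lemma sub_len_le : sub_len <= vbead b - vbead a + 1.
Proof. by rewrite /sub_len leq_add2l leq_b1. Qed.

Lemma map_sub_trip_mid n : vbead a + n < vbead b ->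
  [seq sub_trip i | i <- iota 1 n] =
  [seq (t, fun _ : nat => false, fun _ : nat => true) | t <- iota (vbead a).+1 n].
Proof.
move=> hn; rewrite -(addn1 (vbead a)) iotaDl -map_comp.
apply/eq_in_map => t; rewrite mem_iota => /andP [t_gt0 t_lt] /=.
rewrite /sub_trip; case: t t_gt0 t_lt => // t _ t_lt /=.
by have -> : (vbead a + t.+1 == vbead b) = false by apply/negbTE; lia.
Qed.

Lemma subtr_sub_trip : vle a b -> subtr a b = map sub_trip (iota 0 sub_len).
Proof.
move=> Hab; rewrite /subtr /sub_trips /sub_len.
case: eqP => [Eab|Nab].
  have -> : sub_trip (vbead b - vbead a) = (vbead a, vcoord a, vcoord b).
    by rewrite /sub_trip Eab subnn addn0 !eqxx.
  rewrite Eab subnn add0n /=.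
  by case: (0 < _) => //=; rewrite /sub_trip addn0 Eab !eqxx.
have hab : vbead a < vbead b by case: Hab => // -[].
have Elast : sub_trip (vbead b - vbead a) = (vbead b, fun _ => false, vcoord b).
  rewrite /sub_trip subnKC ?(ltnW hab) // eqxx.
  by have -> : (vbead b - vbead a == 0) = false by apply/negbTE; rewrite subn_eq0 -ltnNge.
rewrite Elast.
have -> : vbead b - vbead a = 1 + (vbead b - (vbead a).+1) + 0 by lia.
rewrite -addnA iotaD map_cat -cat_cons filter_cat !add0n.
congr (_ ++ _).
  rewrite add1n /= -map_sub_trip_mid; last by lia.
  have -> : sub_trip 0 = (vbead a, vcoord a, fun _ => true).
    by rewrite /sub_trip addn0 eqxx; case: eqP.
  rewrite /tdim /= dvw_vcoord_top_pos; last exact: leq_trans hab (vbead_lt b).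
  congr (_ :: _); apply/all_filterP; rewrite map_sub_trip_mid; last by lia.
  rewrite all_map; apply/allP => t; rewrite mem_iota => /andP [t_gt t_lt] /=.
  by apply: dvw_bead_pos; [exact: leq_ltn_trans t_gt | apply: leq_trans (vbead_lt b); lia].
have -> : 1 + (vbead b - (vbead a).+1) = vbead b - vbead a by lia.
by rewrite /=; case: (0 < _); rewrite //= Elast.
Qed.

End SubnecklaceBeads.

Section SubnecklaceIota.
Variables (T : necklace) (a b : ncell T 0).

Lemma ndim_subnk (k : 'I_(nk (subnk a b))) : ndim k = tdim T (ktrip a b k).
Proof.
have := ltn_ord k; rewrite /ndim /ndimn /nk /nlist /ktrip /=; move: (val k) => {}k.
case: (subtr a b) => [|tr s] /=.
  case: k => // _; rewrite /tdim /dvw (eq_count (a2 := pred0)) ?count_pred0 // => p.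
  by rewrite /= andbN.
move=> hk; rewrite -[_ :: _]/(map (tdim T) (tr :: s)).
by rewrite (nth_map (vbead a : nat, vcoord a, vcoord a)) // -(size_map (tdim T)).
Qed.

Lemma ktrip_lt k : (ktrip a b k).1.1 < nk T.
Proof.
rewrite /ktrip; case: (ltnP k (size (subtr a b))) => hk; last by rewrite nth_default ?vbead_lt.
suff /all_nthP : all (fun tr : trip => tr.1.1 < nk T) (subtr a b) by apply.
rewrite /subtr all_filter /sub_trips.
case: eqP => _ /=; first by rewrite vbead_lt implybT.
rewrite vbead_lt implybT all_cat /= vbead_lt implybT !andbT all_map.
have b_lt := vbead_lt b; apply/allP => t; rewrite mem_iota /= => /andP [t_gt t_lt].
by apply/implyP => _; lia.
Qed.

Lemma ktgtE (k : 'I_(nk (subnk a b))) : ktgt k = (ktrip a b k).1.1 :> nat.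
Proof. by rewrite /ktgt inordK // ktrip_lt. Qed.

Lemma ndim_subnk_dvw (k : 'I_(nk (subnk a b))) :
  ndim k = dvw (ndim (ktgt k)) (ktrip a b k).1.2 (ktrip a b k).2.
Proof. by rewrite ndim_subnk /tdim /ndim ktgtE. Qed.

Definition bead_iota (k : 'I_(nk (subnk a b))) : boxmap (ndim k) (ndim (ktgt k)) :=
  BoxMap (proj1 (boxhom_ins_retraction (ndim_subnk_dvw k))).

Lemma bead_iota_inj k : injective (bead_iota k).
Proof.
have [_ [r [_ Hri _]]] := boxhom_ins_retraction (ndim_subnk_dvw k).
exact: can_inj Hri.
Qed.

End SubnecklaceIota.

(** * Terminality of iota^T_{a,b} *)

Section Terminal.
Variables (T : necklace) (a b : ncell T 0).
Hypothesis Hab : vle a b.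

Notation S := (subnk a b).
Notation F := (sub_iota (@bead_iota T a b) : nfun S T).

Lemma vbead_le : vbead a <= vbead b.
Proof. by case: Hab => [/ltnW|[-> _]]. Qed.

Lemma vcoord_sub : vbead a = vbead b -> forall p, vcoord a p -> vcoord b p.
Proof. by case: Hab => [hlt E|[_ H] _]; [rewrite E ltnn in hlt | apply: H]. Qed.

Lemma nk_subnk : nk S = (sub_len a b).-1.+1.
Proof.
rewrite /nk /nlist /= (subtr_sub_trip Hab).
by case: (sub_len a b) => [|l] //=; rewrite !size_map size_iota.
Qed.

Lemma ktrip_sub_trip k : k < sub_len a b -> ktrip a b k = sub_trip a b k.
Proof.
by move=> hk; rewrite /ktrip (subtr_sub_trip Hab) (nth_map 0) ?size_iota // nth_iota.
Qed.

Lemma ktrip_out k : sub_len a b <= k -> ktrip a b k = (vbead a : nat, vcoord a, vcoord a).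
Proof. by move=> hk; rewrite /ktrip nth_default // (subtr_sub_trip Hab) size_map size_iota. Qed.

Lemma subnk_index (k : 'I_(nk S)) : k < sub_len a b \/ (sub_len a b = 0 /\ k = 0 :> nat).
Proof.
have := ltn_ord k; move: (nat_of_ord k) => i; rewrite nk_subnk.
case: (sub_len a b) => [|l] /=; last by left.
by rewrite ltnS leqn0 => /eqP ->; right.
Qed.

Lemma ktgt_subnk (k : 'I_(nk S)) : ktgt k = vbead a + k :> nat.
Proof.
rewrite ktgtE; case: (subnk_index k) => [hk|[hL ->]]; first by rewrite ktrip_sub_trip.
by rewrite ktrip_out ?hL // addn0.
Qed.

Lemma ktrip_first (k : 'I_(nk S)) : k = 0 :> nat -> (ktrip a b k).1.2 = vcoord a.
Proof.
move=> hk; case: (subnk_index k) => [hl|[hL _]]; last by rewrite ktrip_out // hL.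
by rewrite ktrip_sub_trip // /sub_trip hk.
Qed.

Lemma ktrip_later (k : 'I_(nk S)) : 0 < k -> (ktrip a b k).1.2 = (fun _ => false).
Proof.
move=> hk; case: (subnk_index k) => [hl|[_ hk0]]; last by rewrite hk0 in hk.
by rewrite ktrip_sub_trip // /sub_trip; case: (nat_of_ord k) hk.
Qed.

Lemma ktrip_not_last (k : 'I_(nk S)) : k.+1 < nk S -> (ktrip a b k).2 = (fun _ => true).
Proof.
move: (nat_of_ord k) => i; rewrite nk_subnk => hk.
have hL := sub_len_le a b.
rewrite ktrip_sub_trip /sub_trip; last by lia.
by have -> : (vbead a + i == vbead b) = false by apply/negbTE; lia.
Qed.

Lemma bead_iota_ctop (k : 'I_(nk S)) : k.+1 < nk S -> bead_iota k (ctop _) = ctop _.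
Proof.
move=> hk; apply: vpred_ctopP => p hp.
by rewrite /= vpred_ins_ctop -?ndim_subnk_dvw // hp ktrip_not_last // orbT.
Qed.

(* Compatible with the gluing: a non-final bead of T_[a,b] sends omega to omega. *)
Lemma sub_iota_nnorm m (k : 'I_(nk S)) (g : boxmap m (ndim k)) :
  F m (nnorm g) = nnorm (bcomp (bead_iota k) g).
Proof.
case: (boolP (ncanon g)) => H; first by rewrite (nnorm_canon H).
rewrite (nnorm_succ H) /sub_iota /nstar /= /nbead.
have Ek' : ktgt (nsucc H) = (ktgt k).+1 :> nat by rewrite !ktgt_subnk addnS.
have bot0 p : vpred (bead_iota (nsucc H) (cbot _)) p = false.
  by have /= := @ktrip_later (nsucc H) isT; rewrite /= vpred_ins_cbot => ->; rewrite andbF.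
have canon_bot : ncanon (bcomp (bead_iota (nsucc H)) (bconst m (cbot (ndim (nsucc H))))).
  apply: (@ncanon_neq_ctop _ _ _ _ (cbot m)) => /=.
  by apply: (@vpred_neq_ctop _ _ 0) (bot0 0); apply: ndim_pos; rewrite Ek'.
have noncanon : ncanon (bcomp (bead_iota k) g) = false.
  have /andP [hk /forallP Hg] : (k.+1 < nk S) && [forall x, g x == ctop _] by rewrite -noncanonE.
  rewrite (@ncanon_const _ _ _ _ (ctop _)) ?eqxx ?andbT -?Ek' ?ltn_ord // => x /=.
  by rewrite (eqP (Hg x)); apply: bead_iota_ctop.
apply: cell_ext => [|x p];
  by rewrite ?cell_bead_nnorm ?cell_coord_nnorm canon_bot noncanon //= bot0.
Qed.

Lemma sub_iota_natural : natural F.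
Proof.
move=> m n g [[k h] H].
rewrite [F n _]/(nnorm (bcomp (bead_iota k) h)) nact_nnorm.
rewrite [nact g _]/(nnorm (bcomp h g)) sub_iota_nnorm.
by congr nnorm; apply: boxmap_ext.
Qed.

Lemma sub_iota_nvert (k : 'I_(nk S)) (u : cube (ndim k)) :
  F 0 (nvert u) = nvert (bead_iota k u).
Proof. by rewrite /nvert /nbead sub_iota_nnorm; congr nnorm; apply: boxmap_ext. Qed.

Lemma sub_iota_alpha : F 0 (nalpha S) = a.
Proof.
rewrite /nalpha sub_iota_nvert; apply: nvert_eq => [|p]; first by rewrite ktgt_subnk addn0.
have /= := @ktrip_first (@ord0 (size (nlist S)).-1) erefl.
rewrite /= vpred_ins_cbot => ->.
by case: (boolP (vcoord a p)) => h; rewrite ?andbF // andbT /ndim ktgt_subnk addn0 vcoord_lt.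
Qed.

Lemma sub_len0_eq : sub_len a b = 0 -> a = b.
Proof.
rewrite /sub_len => /eqP; rewrite addn_eq0 subn_eq0 eqb0 -eqn0Ngt => /andP [hba /eqP d0].
have Eab : vbead a = vbead b by apply/eqP; rewrite eqn_leq vbead_le.
apply: vertex_ext => // p; apply/idP/idP => [|hb]; first exact: vcoord_sub.
move: d0; rewrite /tdim /sub_trip -Eab subnn addn0 !eqxx /= => d0.
by have := vcoord_lt hb; rewrite -Eab => /(dvw_eq0 d0); apply.
Qed.

Lemma nomega_subnk_index : (@ord_max (size (nlist S)).-1 : nat) = (sub_len a b).-1.
Proof. by move: nk_subnk => /succn_inj. Qed.

Lemma sub_iota_omega_point : sub_len a b = 0 -> F 0 (nomega S) = b.
Proof.
move=> L0; have [Eb Ec] : vbead b = vbead a /\ vcoord b =1 vcoord a.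
  by rewrite -(sub_len0_eq L0).
rewrite /nomega sub_iota_nvert.
move: (@ord_max _) nomega_subnk_index => kl; rewrite L0 => /= kl0.
apply: nvert_eq => [|p]; first by rewrite ktgt_subnk kl0 addn0 Eb.
rewrite Ec /= vpred_ins_ctop -?ndim_subnk_dvw // ktrip_out ?L0 //= orbb.
case: (boolP (vcoord a p)) => h; rewrite ?andbF // andbT.
by rewrite /ndim ktgt_subnk kl0 addn0; apply: vcoord_lt.
Qed.

Lemma sub_iota_omega_last :
  0 < tdim T (sub_trip a b (vbead b - vbead a)) -> F 0 (nomega S) = b.
Proof.
move=> hpos; have eL : sub_len a b = vbead b - vbead a + 1 by rewrite /sub_len hpos.
have hab := vbead_le.
rewrite /nomega sub_iota_nvert; move: (@ord_max _) nomega_subnk_index => kl.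
rewrite eL addn1 /= => ekl.
have hlt : kl < sub_len a b by rewrite ekl eL addn1.
apply: nvert_eq => [|p]; first by rewrite ktgt_subnk ekl subnKC.
rewrite /= vpred_ins_ctop -?ndim_subnk_dvw // ktrip_sub_trip // /sub_trip ekl subnKC // eqxx /=.
case: (boolP (vcoord b p)) => hb.
  by rewrite orbT andbT /ndim ktgt_subnk ekl subnKC //; apply: vcoord_lt.
rewrite orbF; case: ifP => [|_]; last by rewrite andbF.
rewrite subn_eq0 => hba; have Eab : vbead a = vbead b by apply/eqP; rewrite eqn_leq hab.
by apply/negbTE; apply: contra hb => /andP [_]; apply: vcoord_sub.
Qed.

(* The last bead is dropped: omega of the previous bead is alpha of the bead of [b]. *)
Lemma sub_iota_omega_degenerate :
  0 < sub_len a b -> tdim T (sub_trip a b (vbead b - vbead a)) = 0 -> F 0 (nomega S) = b.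
Proof.
move=> Lpos d0; have eL : sub_len a b = vbead b - vbead a by rewrite /sub_len d0 addn0.
have hlt : vbead a < vbead b by rewrite -subn_gt0 -eL.
rewrite /nomega sub_iota_nvert; move: (@ord_max _) nomega_subnk_index => kl.
rewrite eL => ekl.
have Htop : bead_iota kl (ctop _) = ctop _.
  apply: vpred_ctopP => p hp; rewrite /= vpred_ins_ctop -?ndim_subnk_dvw // hp.
  rewrite ktrip_sub_trip /sub_trip; last by rewrite eL ekl; lia.
  have -> : (vbead a + kl == vbead b) = false by apply/negbTE; lia.
  by rewrite orbT.
rewrite Htop (@nvert_ctop_succ _ (ktgt kl) (projT1 (sval b))); last first.
  by rewrite ktgt_subnk ekl -[LHS]/(vbead b); lia.
apply: nvert_eq => // p; rewrite vpred_cbot; apply/esym/negbTE/negP => hb.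
move: d0; rewrite /tdim /sub_trip subnKC ?(ltnW hlt) // eqxx.
have -> : (vbead b - vbead a == 0) = false by apply/negbTE; lia.
by move=> /= d0; have := dvw_eq0 d0 (vcoord_lt hb) hb.
Qed.

Lemma sub_iota_omega : F 0 (nomega S) = b.
Proof.
have [L0|Lpos] := posnP (sub_len a b); first exact: sub_iota_omega_point.
have [d0|dpos] := posnP (tdim T (sub_trip a b (vbead b - vbead a))).
  exact: sub_iota_omega_degenerate.
exact: sub_iota_omega_last.
Qed.

Lemma vbead_sub_iota_ge (k : 'I_(nk S)) (u : cube (ndim k)) :
  vbead a + k <= vbead (F 0 (nvert u)).
Proof. by rewrite sub_iota_nvert -ktgt_subnk vbead_nvert_ge. Qed.

Lemma vbead_sub_iota_canon (k : 'I_(nk S)) (u : cube (ndim k)) :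
  ncanon (bconst 0 u) -> k.+1 < nk S -> vbead (F 0 (nvert u)) = vbead a + k.
Proof.
move=> H hk; rewrite sub_iota_nvert vbead_nvert -ktgt_subnk.
case: ifP => // /andP [_ /eqP E].
have Eu : u = ctop _ by apply: bead_iota_inj; rewrite E bead_iota_ctop.
by move: H; rewrite (@ncanon_const _ _ _ _ u) // hk Eu eqxx.
Qed.

Lemma sub_iota_inj0 : injective (F 0).
Proof.
move=> c1 c2; rewrite [c1]nvert_cell0 [c2]nvert_cell0.
case: c1 c2 => [[k1 h1] H1] [[k2 h2] H2] /= E.
have C1 : ncanon (bconst 0 (h1 cpt)) by rewrite bconst0_pt.
have C2 : ncanon (bconst 0 (h2 cpt)) by rewrite bconst0_pt.
have /val_inj Ek : k1 = k2 :> nat.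
  have B1 := vbead_sub_iota_ge (h1 cpt); have B2 := vbead_sub_iota_ge (h2 cpt).
  case: (ltngtP k1 k2) => // hk.
    have hk1 : k1.+1 < nk S by apply: leq_ltn_trans (ltn_ord k2).
    by have := vbead_sub_iota_canon C1 hk1; rewrite E; lia.
  have hk2 : k2.+1 < nk S by apply: leq_ltn_trans (ltn_ord k1).
  by have := vbead_sub_iota_canon C2 hk2; rewrite -E; lia.
subst k2; rewrite !sub_iota_nvert in E.
by move/nvert_inj/bead_iota_inj: E => ->.
Qed.

Lemma sub_iota_inj m : injective (F m).
Proof.
move=> c1 c2 E; apply: cell_vertex_ext => x; apply: sub_iota_inj0.
by rewrite !sub_iota_natural E.
Qed.

Lemma sub_iota_lift_bead m (t : 'I_(nk T)) (f : boxmap m (ndim t)) (H : ncanon f) :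
  vbead a <= t -> t - vbead a < sub_len a b ->
  (vbead a = t -> forall x p, vcoord a p -> vpred (f x) p) ->
  (t = vbead b :> nat -> forall x p, vpred (f x) p -> vcoord b p) ->
  exists c, F m c = exist _ (existT _ t f) H.
Proof.
move=> hat hk Hlo Hhi.
have hkS : t - vbead a < nk S by rewrite nk_subnk; lia.
pose k := Ordinal hkS.
have Et : ktgt k = t by apply: val_inj; rewrite /= ktgt_subnk /=; lia.
have Ek : ktrip a b k = sub_trip a b (t - vbead a) := ktrip_sub_trip hk.
have He := ndim_subnk_dvw k; rewrite Et in He.
have [_ [r [Hr _ Hir]]] := boxhom_ins_retraction He.
exists (nnorm (BoxMap (bh_comp Hr (bfunP f)) : boxmap m (ndim k))).
rewrite sub_iota_nnorm -(nnorm_canon H).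
apply: nnorm_ext => [|x q]; first by rewrite Et.
have Hin : in_interval (ktrip a b k).1.2 (ktrip a b k).2 (f x).
  move=> q'; rewrite Ek /sub_trip /=; split.
    by case: eqP => [e0|_ //] ha; rewrite -vpredE; apply: Hlo => //; lia.
  by case: eqP => [e0|_ //] hf; apply: (Hhi _ x); [lia | rewrite vpredE].
transitivity (vpred (ins (ndim t) (ktrip a b k).1.2 (ktrip a b k).2 (r (f x))) q).
  by rewrite /= !vpred_ins Et.
by rewrite Hir.
Qed.

Lemma sub_iota_lift_last m (c : ncell T m) :
  cell_bead c = vbead b -> sub_len a b <= vbead b - vbead a ->
  (vbead a = vbead b -> forall x p, vcoord a p -> cell_coord c x p) ->
  (forall x p, cell_coord c x p -> vcoord b p) ->
  F m (nact (bconst m cpt) (nomega S)) = c.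
Proof.
move=> Etb hL Hlo Hhi; have hab := vbead_le.
have d0 : tdim T (sub_trip a b (vbead b - vbead a)) = 0.
  apply/eqP; rewrite -leqn0 leqNgt; apply/negP => hpos.
  by move: hL; rewrite /sub_len hpos addn1 ltnn.
move: d0; rewrite /tdim /sub_trip subnKC // eqxx /= => d0.
rewrite sub_iota_natural sub_iota_omega; apply: cell_vertex_ext => x.
rewrite nact_comp.
have -> : bcomp (bconst m cpt) (bconst 0 x) = bconst 0 cpt by apply: boxmap_ext.
rewrite nact_pt nact_bconst0; apply/esym/nvert_eq => // p.
apply/idP/idP => [|hb]; first exact: Hhi.
have := dvw_eq0 d0 (vcoord_lt hb) hb; case: eqP => // e0 ha.
by apply: Hlo => //; lia.
Qed.

Lemma sub_iota_onto U (G : nfun U T) :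
  nec_over a b G -> forall m (c : ncell U m), exists c', F m c' = G m c.
Proof.
move=> [HG [Ha Hb]] m c.
have Hv x : vle a (nact (bconst 0 x) (G m c)) /\ vle (nact (bconst 0 x) (G m c)) b.
  by rewrite -HG -{1}Ha -Hb; split; [exact: natural_alpha_vle | exact: natural_vle_omega].
case: (G m c) Hv => [[t f] H] Hv.
have {}Hv x : vle a (nvert (f x)) /\ vle (nvert (f x)) b.
  by rewrite -(nact_bconst0 (exist _ (existT _ t f) H)); exact: Hv.
have /= [hat Hlo] := ncanon_vle_lower H (proj1 (Hv (cbot m))).
have [htb Hhi] := vle_upper (proj2 (Hv (ctop m))).
have [hk|hk] := ltnP (t - vbead a) (sub_len a b); first exact: sub_iota_lift_bead.
have hL : vbead b - vbead a <= sub_len a b := leq_addr _ _.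
have Etb : t = vbead b :> nat by lia.
exists (nact (bconst m cpt) (nomega S)); apply: sub_iota_lift_last => //=.
- by rewrite -Etb; lia.
- by rewrite -Etb.
- exact: Hhi.
Qed.

Lemma sub_iota_terminal : terminal_in_Nec_over a b F.
Proof.
split.
  by split; [exact: sub_iota_natural | split; [exact: sub_iota_alpha | exact: sub_iota_omega]].
move=> U G HGab; have [HG [Ha Hb]] := HGab.
have lift m (c : ncell U m) : {c' | F m c' = G m c}.
  exact: constructive_indefinite_description (sub_iota_onto HGab c).
pose H : nfun U S := fun m c => sval (lift m c).
have FH m c : F m (H m c) = G m c := svalP (lift m c).
exists H; split.
- split; [|split].
  + by move=> m n g c; apply: sub_iota_inj; rewrite sub_iota_natural !FH HG.
  + by apply: sub_iota_inj; rewrite FH sub_iota_alpha Ha.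
  + by apply: sub_iota_inj; rewrite FH sub_iota_omega Hb.
- exact: FH.
- by move=> H' _ E' m c; apply: sub_iota_inj; rewrite FH; exact: E'.
Qed.

End Terminal.

Theorem proposition2p8 (T : necklace) (a b : ncell T 0) :
  nprec a b ->
  exists hs : forall k : 'I_(nk (subnk a b)), boxmap (ndim k) (ndim (ktgt k)),
    is_sub_iota hs /\ terminal_in_Nec_over a b (sub_iota hs).
Proof.
move=> /nprec_vle Hab; exists (@bead_iota T a b); split=> //.
exact: sub_iota_terminal.
Qed.
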